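(* Let $X$ be a subspace of $\beta\omega$ with $\omega\subseteq X$. If $\operatorname{CL}(X)$ is pseudocompact, then for every cardinal $\kappa<\mathfrak h$, $\omega^\kappa$ is relatively countably compact in $X^\kappa$; consequently $X$ is $(\kappa,\omega^* )$-pseudocompact.
   Context: $\beta\omega$ is the Stone–Čech compactification of the discrete space $\omega$, $\omega^*$ its set of free ultrafilters. $\mathfrak h$ is the least cardinality of a family of open dense subsets of $([\omega]^\omega,\subseteq^* )$ with empty intersection (a family $\mathcal D\subseteq[\omega]^\omega$ is open dense if every $A\in[\omega]^\omega$ contains some $B\in\mathcal D$, and $\mathcal D$ is closed under infinite $\subseteq^*$-subsets). A subset $Y$ of $Z$ is relatively countably compact in $Z$ if every countably infinite subset of $Y$ has an accumulation point in $Z$. For $p\in\omega^*$ and sets $B_n\subseteq X$, $x$ is a $p$-limit of $(B_n)$ if $\{n:V\cap B_n\ne\emptyset\}\in p$ for each neighborhood $V$ of $x$; $X$ is $(\kappa,\omega^* )$-pseudocompact if for every family of $\kappa$ sequences of nonempty open subsets of $X$ there is a single $p\in\omega^*$ such that each sequence has a $p$-limit point in $X$. $\operatorname{CL}(X)$ is the set of nonempty closed subsets of $X$ with the Vietoris topology; pseudocompact means every continuous real-valued function is bounded. *)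

From Stdlib Require Import Reals List.
Open Scope R_scope.

Definition finite_set {T : Type} (A : T -> Prop) : Prop :=
  exists l : list T, forall x, A x -> In x l.
Definition infinite_set {T : Type} (A : T -> Prop) : Prop := ~ finite_set A.
Definition countably_infinite {T : Type} (Y : T -> Prop) : Prop :=
  exists f : nat -> T, (forall m n, f m = f n -> m = n) /\
                       (forall y, Y y <-> exists n, f n = y).

Definition is_ultrafilter (U : (nat -> Prop) -> Prop) : Prop :=
  U (fun _ => True) /\ ~ U (fun _ => False) /\
  (forall A B : nat -> Prop, U A -> (forall n, A n -> B n) -> U B) /\
  (forall A B : nat -> Prop, U A -> U B -> U (fun n => A n /\ B n)) /\
  (forall A : nat -> Prop, U A \/ U (fun n => ~ A n)).

Definition bw : Type := { U : (nat -> Prop) -> Prop | is_ultrafilter U }.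

Definition mem (p : bw) (A : nat -> Prop) : Prop := proj1_sig p A.

Lemma principal_uf (n : nat) : is_ultrafilter (fun A => A n).
Proof.
  repeat split; auto.
  intros A; destruct (Classical_Prop.classic (A n)); auto.
Qed.

(** the principal ultrafilter at n: the copy of n in beta omega *)
Definition pr (n : nat) : bw := exist _ (fun A => A n) (principal_uf n).

Definition omega_star (p : bw) : Prop := ~ exists n, p = pr n.

(** * Subspace topology on X ⊆ beta omega.
    The sets {p | A ∈ p} form a base of beta omega. *)
Definition open_in (X : bw -> Prop) (U : bw -> Prop) : Prop :=
  (forall p, U p -> X p) /\
  (forall p, U p -> exists A, mem p A /\ forall q, X q -> mem q A -> U q).

Definition closed_in (X : bw -> Prop) (F : bw -> Prop) : Prop :=
  (forall p, F p -> X p) /\ open_in X (fun p => X p /\ ~ F p).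

Definition CL (X : bw -> Prop) (F : bw -> Prop) : Prop :=
  closed_in X F /\ exists p, F p.

Definition vbasic (Us Vs : list (bw -> Prop)) (G : bw -> Prop) : Prop :=
  (forall U, In U Us -> forall p, G p -> U p) /\
  (forall V, In V Vs -> exists p, G p /\ V p).

Definition vietoris_open (X : bw -> Prop) (O : (bw -> Prop) -> Prop) : Prop :=
  forall F, CL X F -> O F ->
    exists Us Vs : list (bw -> Prop),
      (forall U, In U Us -> open_in X U) /\
      (forall V, In V Vs -> open_in X V) /\
      vbasic Us Vs F /\
      (forall G, CL X G -> vbasic Us Vs G -> O G).

(** * Product topology on X^K (K an index set of cardinality kappa) *)
Definition prod_space {K : Type} (X : bw -> Prop) (x : K -> bw) : Prop :=
  forall k, X (x k).

Definition prod_open {K : Type} (X : bw -> Prop) (O : (K -> bw) -> Prop) : Prop :=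
  forall x, prod_space X x -> O x ->
    exists (ks : list K) (U : K -> bw -> Prop),
      (forall k, open_in X (U k)) /\
      (forall k, In k ks -> U k (x k)) /\
      (forall y, prod_space X y -> (forall k, In k ks -> U k (y k)) -> O y).

Definition accumulation_point {T : Type} (S : T -> Prop) (op : (T -> Prop) -> Prop)
  (Y : T -> Prop) (x : T) : Prop :=
  S x /\ forall O, op O -> O x -> infinite_set (fun y => Y y /\ O y).

Definition rel_countably_compact {T : Type} (S : T -> Prop)
  (op : (T -> Prop) -> Prop) (Y : T -> Prop) : Prop :=
  forall Z, (forall y, Z y -> Y y) -> countably_infinite Z ->
    exists x, accumulation_point S op Z x.

Definition continuous_on {T : Type} (S : T -> Prop) (op : (T -> Prop) -> Prop)
  (f : T -> R) : Prop :=
  forall x, S x -> forall eps, 0 < eps ->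
    exists O, op O /\ O x /\ forall y, S y -> O y -> Rabs (f y - f x) < eps.

Definition pseudocompact {T : Type} (S : T -> Prop) (op : (T -> Prop) -> Prop) : Prop :=
  forall f : T -> R, continuous_on S op f -> exists M, forall x, S x -> Rabs (f x) <= M.

Definition almost_sub (A B : nat -> Prop) : Prop :=
  finite_set (fun n => A n /\ ~ B n).

Definition open_dense (D : (nat -> Prop) -> Prop) : Prop :=
  (forall B, D B -> infinite_set B) /\
  (forall A, infinite_set A -> exists B, D B /\ forall n, B n -> A n) /\
  (forall B C, D B -> infinite_set C -> almost_sub C B -> D C).

(** |K| < h : every family of at most |K| open dense subsets of
    ([omega]^omega, ⊆* ) has nonempty intersection *)
Definition card_lt_h (K : Type) : Prop :=
  forall D : K -> ((nat -> Prop) -> Prop), (forall k, open_dense (D k)) ->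
    exists A, infinite_set A /\ forall k, D k A.

Definition p_limit (X : bw -> Prop) (p : bw) (B : nat -> bw -> Prop) (x : bw) : Prop :=
  X x /\ forall V, open_in X V -> V x -> mem p (fun n => exists q, V q /\ B n q).

Definition kappa_omega_star_pseudocompact (K : Type) (X : bw -> Prop) : Prop :=
  forall U : K -> nat -> bw -> Prop,
    (forall k n, open_in X (U k n) /\ exists q, U k n q) ->
    exists p, omega_star p /\ forall k, exists x, p_limit X p (U k) x.

(* Both conclusions reduce to one statement: for every family (g_k)_{k<kappa} of
   maps omega -> omega there is a free ultrafilter p with every image g_k(p) in X.
   Indeed (g_k(p))_k is then an accumulation point of the points (g_k(n))_k of
   omega^kappa, and if g_k(n) is chosen in the open set U_{k,n} (omega is dense in X),
   then g_k(p) is a p-limit of (U_{k,n})_n.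

   Since kappa < h, a single infinite set C = {c_0 < c_1 < ...} makes every g_k
   either eventually constant on C or eventually non-crossing on C, so that
   g_k(c_{2i+1}) lies in the block [c_{2i}, c_{2i+2}).  The blocks, seen as finite
   sets of principal ultrafilters, are distinct isolated points of CL(X); without an
   accumulation point, sending the i-th block to i and everything else to 0 would be
   an unbounded continuous function.  So pseudocompactness yields a Vietoris
   accumulation point F, and an ultrafilter p on the block indices along which the
   blocks converge to F.  Because the blocks are disjoint, the p-limit of any
   selection from them is a point of F, hence of X; the required ultrafilter is the
   image of p under i |-> c_{2i+1}. *)

From Stdlib Require Import Reals List Arith Lia Lra.
From Stdlib Require Import ClassicalEpsilon.
From Stdlib Require Import FunctionalExtensionality PropExtensionality ProofIrrelevance.
From mathcomp Require filter.
Local Open Scope nat_scope.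

Lemma pred_ext {T : Type} (G H : T -> Prop) : (forall q, G q <-> H q) -> G = H.
Proof.
  intros E. apply functional_extensionality. intros q. apply propositional_extensionality, E.
Qed.

Lemma finite_set_bounded (A : nat -> Prop) : finite_set A -> exists M, forall n, A n -> n < M.
Proof.
  intros [l Hl]. exists (S (fold_right max 0 l)). intros n Hn.
  specialize (Hl n Hn). clear Hn. induction l as [|a l IH]; simpl in *; [contradiction|].
  destruct Hl as [<-|Hl]; [lia|]. specialize (IH Hl). lia.
Qed.

Lemma bounded_finite_set (A : nat -> Prop) M : (forall n, A n -> n < M) -> finite_set A.
Proof.
  intros H. exists (seq 0 M). intros n Hn. apply in_seq. specialize (H n Hn). lia.
Qed.

Lemma infinite_set_unbounded (A : nat -> Prop) :
  infinite_set A -> forall M, exists n, A n /\ M <= n.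
Proof.
  intros HA M. apply NNPP. intros Hn. apply HA. apply (bounded_finite_set _ M).
  intros n Hn'. destruct (le_lt_dec M n); [|assumption]. exfalso; apply Hn; eauto.
Qed.

Lemma unbounded_infinite_set (A : nat -> Prop) :
  (forall M, exists n, A n /\ M <= n) -> infinite_set A.
Proof.
  intros H Hf. destruct (finite_set_bounded _ Hf) as [M HM]. destruct (H M) as [n [Hn Hle]].
  specialize (HM n Hn). lia.
Qed.

Lemma injective_preimage_finite {T : Type} (e : nat -> T) (l : list T) :
  (forall m n, e m = e n -> m = n) -> finite_set (fun n => In (e n) l).
Proof.
  intros He. induction l as [|a l [l' Hl']].
  - exists nil. intros n [].
  - destruct (classic (exists n0, e n0 = a)) as [[n0 E]|Hn].
    + exists (n0 :: l'). intros n [h|h]; [left; apply He; congruence|right; auto].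
    + exists l'. intros n [h|h]; [exfalso; eauto|auto].
Qed.

Lemma strict_mono_le (s : nat -> nat) : (forall j, s j < s (S j)) ->
  forall j j', j <= j' -> s j <= s j'.
Proof. intros Hs j j' h. induction h as [|j' h IH]; [lia|]. specialize (Hs j'). lia. Qed.

Lemma strict_mono_lt (s : nat -> nat) : (forall j, s j < s (S j)) ->
  forall j j', j < j' -> s j < s j'.
Proof. intros Hs j j' h. pose proof (strict_mono_le s Hs (S j) j' h). specialize (Hs j). lia. Qed.

Lemma strict_mono_ge_id (s : nat -> nat) : (forall j, s j < s (S j)) -> forall j, j <= s j.
Proof. intros Hs j. induction j as [|j IH]; [lia|]. specialize (Hs j). lia. Qed.

Lemma infinite_set_enum (C : nat -> Prop) : infinite_set C ->
  exists c : nat -> nat, (forall i, C (c i)) /\ (forall i, c i < c (S i)).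
Proof.
  intros HC. destruct (choice _ (infinite_set_unbounded _ HC)) as [next Hnext].
  exists (fix c i := match i with 0 => next 0 | S i => next (S (c i)) end). split.
  - intros [|i]; apply Hnext.
  - intros i. apply Hnext.
Qed.

Lemma mem_superset (p : bw) (A B : nat -> Prop) : mem p A -> (forall n, A n -> B n) -> mem p B.
Proof. destruct p as [P HP]; unfold mem; simpl. destruct HP as (_&_&H&_). eauto. Qed.

Lemma mem_and (p : bw) (A B : nat -> Prop) : mem p A -> mem p B -> mem p (fun n => A n /\ B n).
Proof. destruct p as [P HP]; unfold mem; simpl. destruct HP as (_&_&_&H&_). eauto. Qed.

Lemma mem_true (p : bw) : mem p (fun _ => True).
Proof. destruct p as [P HP]; unfold mem; simpl. apply HP. Qed.

Lemma mem_compl (p : bw) (A : nat -> Prop) : ~ mem p A -> mem p (fun n => ~ A n).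
Proof.
  destruct p as [P HP]; unfold mem; simpl. destruct HP as (_&_&_&_&H).
  intros h. destruct (H A); tauto.
Qed.

Lemma mem_inhabited (p : bw) (A : nat -> Prop) : mem p A -> exists n, A n.
Proof.
  destruct p as [P HP]; unfold mem; simpl. destruct HP as (_&HF&Hup&_).
  intros H. apply NNPP; intros Hn. apply HF. apply (Hup _ _ H). intros n Hn'; apply Hn; eauto.
Qed.

Lemma mem_list_forall {I : Type} (p : bw) (P : I -> nat -> Prop) (l : list I) :
  (forall k, In k l -> mem p (P k)) -> mem p (fun n => forall k, In k l -> P k n).
Proof.
  induction l as [|a l IH]; intros H.
  - apply (mem_superset _ _ _ (mem_true p)). intros n _ k [].
  - apply (mem_superset _ _ _ (mem_and _ _ _ (H a (or_introl eq_refl))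
                                          (IH (fun k h => H k (or_intror h))))).
    intros n [h1 h2] k [<-|hk]; auto.
Qed.

Lemma bw_ext (p q : bw) : (forall A, mem p A -> mem q A) -> p = q.
Proof.
  intros H.
  assert (E : proj1_sig p = proj1_sig q).
  { apply functional_extensionality; intros A. apply propositional_extensionality.
    split; [apply H|]. intros Hq. apply NNPP; intros Hp.
    destruct (mem_inhabited q _ (mem_and _ _ _ Hq (H _ (mem_compl p A Hp)))) as [n [a b]].
    auto. }
  destruct p as [P HP], q as [Q HQ]; simpl in E; subst Q.
  f_equal; apply proof_irrelevance.
Qed.

Lemma bw_separate (p q : bw) : p <> q -> exists A, mem p A /\ ~ mem q A.
Proof.
  intros Hpq. apply NNPP; intros Hn. apply Hpq, bw_ext. intros A HA.
  apply NNPP; intros HqA. apply Hn. eauto.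
Qed.

Lemma mem_singleton_pr (q : bw) m : mem q (fun n => n = m) -> q = pr m.
Proof.
  intros H. apply bw_ext. intros A HA. unfold mem, pr; simpl.
  destruct (mem_inhabited _ _ (mem_and _ _ _ H HA)) as [n [En a]]. subst n. exact a.
Qed.

Lemma pr_inj a b : pr a = pr b -> a = b.
Proof.
  intros H. assert (h : mem (pr a) (fun n => n = a)) by reflexivity.
  rewrite H in h. exact (eq_sym h).
Qed.

Lemma mem_finite_principal (q : bw) (A : nat -> Prop) :
  finite_set A -> mem q A -> exists m, A m /\ q = pr m.
Proof.
  intros [l Hl]. revert A Hl. induction l as [|a l IH]; intros A Hl HA.
  - destruct (mem_inhabited _ _ HA) as [n Hn]. destruct (Hl n Hn).
  - destruct (classic (mem q (fun n => n = a))) as [Ha|Ha].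
    + destruct (mem_inhabited _ _ (mem_and _ _ _ HA Ha)) as [n [An En]]. subst n.
      exists a. split; [exact An|apply mem_singleton_pr, Ha].
    + destruct (IH (fun n => A n /\ n <> a)) as [m [[Am _] Hm]].
      * intros n [An ne]. destruct (Hl n An); [congruence|assumption].
      * exact (mem_and _ _ _ HA (mem_compl _ _ Ha)).
      * eauto.
Qed.

Lemma omega_star_finite (p : bw) (A : nat -> Prop) : omega_star p -> finite_set A -> ~ mem p A.
Proof.
  intros Hp Hf HA. destruct (mem_finite_principal p A Hf HA) as [m [_ ->]].
  apply Hp. eauto.
Qed.

Lemma omega_star_ge (p : bw) M : omega_star p -> mem p (fun n => M <= n).
Proof.
  intros Hp. apply (mem_superset _ _ _ (mem_compl _ _ (omega_star_finite p (fun n => n < M) Hp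
                                                     (bounded_finite_set _ M (fun n h => h))))).
  intros n. lia.
Qed.

Lemma ge_omega_star (p : bw) : (forall M, mem p (fun n => M <= n)) -> omega_star p.
Proof. intros H [n ->]. specialize (H (S n)). cbv in H. lia. Qed.

Lemma bw_image_ultrafilter (f : nat -> nat) (p : bw) :
  is_ultrafilter (fun A => mem p (fun n => A (f n))).
Proof.
  repeat split.
  - apply mem_true.
  - intros H. destruct (mem_inhabited _ _ H) as [n []].
  - intros A B HA HAB. apply (mem_superset _ _ _ HA). auto.
  - intros A B HA HB. apply (mem_and _ _ _ HA HB).
  - intros A. destruct (classic (mem p (fun n => A (f n)))); [auto|right].
    apply mem_compl. auto.
Qed.

Definition bw_image (f : nat -> nat) (p : bw) : bw := exist _ _ (bw_image_ultrafilter f p).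

Lemma mem_bw_image (f : nat -> nat) (p : bw) (A : nat -> Prop) :
  mem (bw_image f p) A = mem p (fun n => A (f n)).
Proof. reflexivity. Qed.

Lemma bw_image_comp (f g : nat -> nat) (p : bw) :
  bw_image g (bw_image f p) = bw_image (fun n => g (f n)) p.
Proof. apply bw_ext. intros A HA. exact HA. Qed.

Lemma bw_image_eventually_constant (f : nat -> nat) (p : bw) m :
  mem p (fun n => f n = m) -> bw_image f p = pr m.
Proof. intros H. apply mem_singleton_pr. exact H. Qed.

Lemma bw_image_omega_star (f : nat -> nat) (p : bw) :
  (forall n, n <= f n) -> omega_star p -> omega_star (bw_image f p).
Proof.
  intros Hf Hp. apply ge_omega_star. intros M. rewrite mem_bw_image.
  apply (mem_superset _ _ _ (omega_star_ge p M Hp)). intros n h. specialize (Hf n). lia.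
Qed.

Lemma filter_extends_to_bw (Fil : (nat -> Prop) -> Prop) :
  (forall A B, Fil A -> (forall n, A n -> B n) -> Fil B) ->
  (forall A B, Fil A -> Fil B -> Fil (fun n => A n /\ B n)) ->
  Fil (fun _ => True) ->
  (forall A, Fil A -> exists n, A n) ->
  exists p : bw, forall A, Fil A -> mem p A.
Proof.
  intros Hup Hand HT Hne.
  assert (PF : filter.ProperFilter Fil).
  { constructor.
    - intros H. destruct (Hne _ H) as [n Hn]. exact Hn.
    - constructor.
      + exact HT.
      + intros A B HA HB. apply (Hup _ _ (Hand _ _ HA HB)). intros n [a b]; split; assumption.
      + intros P Q HPQ HP. exact (Hup _ _ HP HPQ). }
  destruct (filter.ultraFilterLemma PF) as [G [UG sub]].
  pose proof (@filter.ultra_proper _ _ UG) as PG.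
  pose proof (@filter.filter_filter _ _ PG) as FG.
  assert (Hu : is_ultrafilter G).
  { repeat split.
    - exact (@filter.filterT _ _ FG).
    - intro H. apply (@filter.filter_not_empty _ G PG).
      exact (@filter.filterS _ _ FG _ _ (fun x (h : False) => h) H).
    - intros A B HA HAB. exact (@filter.filterS _ _ FG _ _ HAB HA).
    - intros A B HA HB. exact (@filter.filterI _ _ FG _ _ HA HB).
    - intros A. exact (filter.in_ultra_setVsetC A UG). }
  exists (exist _ G Hu). intros A HA. exact (sub A HA).
Qed.

Section OpenSets.

Variable X : bw -> Prop.
Hypothesis omega_sub_X : forall n, X (pr n).

Lemma open_in_mem (A : nat -> Prop) : open_in X (fun q => X q /\ mem q A).
Proof. split; [intros p [h _]; exact h|]. intros p [_ h]. exists A. split; auto. Qed.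

Lemma open_in_neq (q : bw) : open_in X (fun q' => X q' /\ q' <> q).
Proof.
  split; [intros p [h _]; exact h|]. intros p [_ Hpq].
  destruct (bw_separate p q Hpq) as [A [HpA HqA]].
  exists A. split; [exact HpA|]. intros q' Xq' Hq'A. split; [exact Xq'|].
  intros ->. exact (HqA Hq'A).
Qed.

Lemma open_in_pr (U : bw -> Prop) q : open_in X U -> U q -> exists m, U (pr m).
Proof.
  intros [_ HU] Hq. destruct (HU q Hq) as [A [HA HA']].
  destruct (mem_inhabited _ _ HA) as [m Hm]. exists m. apply HA'; auto.
Qed.

Lemma open_in_bw_image (V : bw -> Prop) (f : nat -> nat) (p : bw) :
  open_in X V -> V (bw_image f p) -> mem p (fun n => V (pr (f n))).
Proof.
  intros [_ HV] Hx. destruct (HV _ Hx) as [A [HA HA']].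
  rewrite mem_bw_image in HA. apply (mem_superset _ _ _ HA). intros n hn. apply HA'; auto.
Qed.

Definition principal_set (l : list nat) (q : bw) : Prop := exists m, In m l /\ q = pr m.

Lemma principal_set_CL (l : list nat) : l <> nil -> CL X (principal_set l).
Proof.
  intros Hl. split; [split|].
  - intros q [m [_ ->]]. auto.
  - split; [intros q [h _]; exact h|]. intros q [Xq nq]. exists (fun n => ~ In n l). split.
    + apply mem_compl. intros h. apply nq.
      apply (mem_finite_principal q _ (ex_intro _ l (fun n h => h)) h).
    + intros q' Xq' h. split; [exact Xq'|]. intros [m [Hm ->]]. exact (h Hm).
  - destruct l as [|a l]; [congruence|]. exists (pr a), a. split; [left|]; reflexivity.
Qed.

Lemma vietoris_open_vbasic (Us Vs : list (bw -> Prop)) :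
  (forall U, In U Us -> open_in X U) -> (forall V, In V Vs -> open_in X V) ->
  vietoris_open X (vbasic Us Vs).
Proof. intros HU HV F _ HF. exists Us, Vs. auto. Qed.

Lemma vietoris_open_and (O1 O2 : (bw -> Prop) -> Prop) :
  vietoris_open X O1 -> vietoris_open X O2 -> vietoris_open X (fun G => O1 G /\ O2 G).
Proof.
  intros H1 H2 F HF [h1 h2].
  destruct (H1 F HF h1) as (Us1 & Vs1 & HU1 & HV1 & [b1 c1] & HO1).
  destruct (H2 F HF h2) as (Us2 & Vs2 & HU2 & HV2 & [b2 c2] & HO2).
  exists (Us1 ++ Us2), (Vs1 ++ Vs2).
  split; [|split; [|split; [split|]]].
  - intros U HU; apply in_app_or in HU; destruct HU; auto.
  - intros V HV; apply in_app_or in HV; destruct HV; auto.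
  - intros U HU p Fp; apply in_app_or in HU; destruct HU; [apply (b1 U)|apply (b2 U)]; auto.
  - intros V HV; apply in_app_or in HV; destruct HV; auto.
  - intros G HG [bG cG]. split; [apply HO1|apply HO2]; auto; split.
    + intros U HU. apply (bG U), in_or_app; auto.
    + intros V HV. apply (cG V), in_or_app; auto.
    + intros U HU. apply (bG U), in_or_app; auto.
    + intros V HV. apply (cG V), in_or_app; auto.
Qed.

Lemma vietoris_open_true : vietoris_open X (fun _ => True).
Proof.
  intros F _ _. exists nil, nil.
  split; [|split; [|split; [split|]]]; simpl; tauto.
Qed.

Lemma vietoris_open_neq (G0 : bw -> Prop) : CL X G0 -> vietoris_open X (fun G => G <> G0).
Proof.
  intros [[G0X [_ G0closed]] _] F [[FX _] _] HFG0.
  assert (Hq : exists q, ~ (F q <-> G0 q)).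
  { apply NNPP; intros h. apply HFG0, pred_ext. intros q. apply NNPP; intros h'. eauto. }
  destruct Hq as [q Hq]. destruct (classic (F q)) as [Fq|Fq].
  - assert (nG0q : ~ G0 q) by tauto.
    destruct (G0closed q (conj (FX q Fq) nG0q)) as [A [HqA HA]].
    exists nil, ((fun q' => X q' /\ mem q' A) :: nil).
    split; [simpl; tauto|split; [|split; [split|]]].
    + intros V [<-|[]]. apply open_in_mem.
    + simpl; tauto.
    + intros V [<-|[]]. exists q. auto.
    + intros G _ [_ hV] ->. destruct (hV _ (or_introl eq_refl)) as [q' [G0q' [Xq' Aq']]].
      exact (proj2 (HA q' Xq' Aq') G0q').
  - assert (G0q : G0 q) by tauto.
    exists ((fun q' => X q' /\ q' <> q) :: nil), nil.
    split; [|split; [simpl; tauto|split; [split|]]].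
    + intros U [<-|[]]. apply open_in_neq.
    + intros U [<-|[]] q' Fq'. split; [auto|]. intros ->. exact (Fq Fq').
    + simpl; tauto.
    + intros G _ [hU _] ->. exact (proj2 (hU _ (or_introl eq_refl) q G0q) eq_refl).
Qed.

Lemma vietoris_open_eq_principal_set (l : list nat) :
  vietoris_open X (fun G => G = principal_set l).
Proof.
  intros F _ ->.
  exists ((fun q => X q /\ mem q (fun n => In n l)) :: nil),
         (map (fun m q => X q /\ mem q (fun n => n = m)) l).
  split; [|split; [|split; [split|]]].
  - intros U [<-|[]]. apply open_in_mem.
  - intros V HV. apply in_map_iff in HV. destruct HV as [m [<- _]]. apply open_in_mem.
  - intros U [<-|[]] q [m [Hm ->]]. split; auto.
  - intros V HV. apply in_map_iff in HV. destruct HV as [m [<- Hm]].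
    exists (pr m). split; [exists m; auto|split; [auto|reflexivity]].
  - intros G _ [hU hV]. apply pred_ext. intros q. split.
    + intros Gq. destruct (hU _ (or_introl eq_refl) q Gq) as [_ h].
      exact (mem_finite_principal q _ (ex_intro _ l (fun n h => h)) h).
    + intros [m [Hm ->]].
      destruct (hV (fun q => X q /\ mem q (fun n => n = m))) as [q' [Gq' [_ h]]].
      * apply in_map_iff. eauto.
      * rewrite <- (mem_singleton_pr q' m h). exact Gq'.
Qed.

End OpenSets.

Section IsolatedSequence.

Variables (T : Type) (S : T -> Prop) (op : (T -> Prop) -> Prop).
Hypothesis op_true : op (fun _ => True).
Hypothesis op_and : forall O1 O2, op O1 -> op O2 -> op (fun y => O1 y /\ O2 y).

Lemma op_list_forall {I : Type} (O : I -> T -> Prop) (l : list I) :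
  (forall i, In i l -> op (O i)) -> op (fun y => forall i, In i l -> O i y).
Proof.
  induction l as [|a l IH]; intros H.
  - rewrite (pred_ext (fun y => forall i, In i nil -> O i y) (fun _ => True));
      [exact op_true|]. intros y. simpl. tauto.
  - rewrite (pred_ext (fun y => forall i, In i (a :: l) -> O i y)
                      (fun y => O a y /\ forall i, In i l -> O i y)).
    + apply op_and; [apply H; left; reflexivity|apply IH; intros i hi; apply H; right; exact hi].
    + intros y. simpl. split; [auto|]. intros [h1 h2] i [<-|hi]; auto.
Qed.

Variable x : nat -> T.

Lemma accumulation_ultrafilter (a : T) :
  (forall O, op O -> O a -> infinite_set (fun i => O (x i))) ->
  exists p, omega_star p /\ forall O, op O -> O a -> mem p (fun i => O (x i)).
Proof.
  intros Hacc.
  destruct (filter_extends_to_bw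
              (fun N => exists O, op O /\ O a /\ exists M, forall i, O (x i) -> M <= i -> N i))
    as [p Hp].
  - intros A B (O & HO & Oa & M & HM) HAB. exists O. split; [|split]; eauto.
  - intros A B (O1 & HO1 & O1a & M1 & HM1) (O2 & HO2 & O2a & M2 & HM2).
    exists (fun y => O1 y /\ O2 y). split; [apply op_and; auto|split; [auto|]].
    exists (max M1 M2). intros i [h1 h2] hi. split; [apply HM1|apply HM2]; auto; lia.
  - exists (fun _ => True). split; [exact op_true|split; [exact I|exists 0; auto]].
  - intros A (O & HO & Oa & M & HM).
    destruct (infinite_set_unbounded _ (Hacc O HO Oa) M) as [i [h1 h2]]. eauto.
  - exists p. split.
    + apply ge_omega_star. intros M. apply Hp.
      exists (fun _ => True). split; [exact op_true|split; [exact I|exists M; auto]].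
    + intros O HO Oa. apply Hp. exists O. split; [|split; [|exists 0]]; auto.
Qed.

Hypothesis x_inj : forall i j, x i = x j -> i = j.
Hypothesis x_in : forall i, S (x i).
Hypothesis x_isolated : forall i, op (fun y => y = x i).
Hypothesis x_closed : forall i, op (fun y => y <> x i).

Definition seq_index (y : T) : R :=
  match excluded_middle_informative (exists i, y = x i) with
  | left _ => INR (epsilon (inhabits 0) (fun i => y = x i))
  | right _ => 0%R
  end.

Lemma seq_index_at i : seq_index (x i) = INR i.
Proof.
  unfold seq_index. destruct (excluded_middle_informative _) as [h|h]; [|exfalso; eauto].
  f_equal. apply x_inj. symmetry. exact (epsilon_spec _ (fun j => x i = x j) h).
Qed.

Lemma seq_index_off y : ~ (exists i, y = x i) -> seq_index y = 0%R.
Proof. intros Hy. unfold seq_index. destruct (excluded_middle_informative _); tauto. Qed.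

Lemma seq_index_continuous :
  (forall y, S y -> ~ (exists i, y = x i) ->
     exists O, op O /\ O y /\ finite_set (fun i => O (x i))) ->
  continuous_on S op seq_index.
Proof.
  intros Hfin y Sy eps Heps. destruct (classic (exists i, y = x i)) as [[i ->]|Hy].
  - exists (fun y' => y' = x i). split; [apply x_isolated|split; [reflexivity|]].
    intros y' _ ->. unfold Rminus. rewrite Rplus_opp_r, Rabs_R0. exact Heps.
  - destruct (Hfin y Sy Hy) as (O & HO & Oy & Hf). destruct (finite_set_bounded _ Hf) as [M HM].
    exists (fun y' => O y' /\ forall j, In j (seq 0 M) -> y' <> x j). split; [|split].
    + apply op_and; [exact HO|]. apply op_list_forall. intros j _. apply x_closed.
    + split; [exact Oy|]. intros j _ ->. apply Hy. eauto.
    + intros y' _ [Oy' Hy']. rewrite (seq_index_off y Hy), seq_index_off.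
      * unfold Rminus. rewrite Rplus_opp_r, Rabs_R0. exact Heps.
      * intros [j ->]. apply (Hy' j); [apply in_seq; specialize (HM j Oy'); lia|reflexivity].
Qed.

Lemma pseudocompact_accumulation_point :
  pseudocompact S op -> exists a, S a /\ forall O, op O -> O a -> infinite_set (fun i => O (x i)).
Proof.
  intros Hps. apply NNPP; intros Hn. destruct (Hps seq_index) as [M HM].
  - apply seq_index_continuous. intros y Sy _. apply NNPP; intros h. apply Hn.
    exists y. split; [exact Sy|]. intros O HO Oy Hf. apply h. eauto.
  - destruct (INR_unbounded M) as [i Hi]. specialize (HM (x i) (x_in i)).
    rewrite seq_index_at, Rabs_right in HM; [lra|apply Rle_ge, pos_INR].
Qed.

End IsolatedSequence.

(* The asymmetric bounds are what put [f (c (2*i+1))] in the half-open block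
   [[c (2*i), c (2*i+2))] below. *)
Definition noncrossing (f : nat -> nat) (C : nat -> Prop) (N : nat) : Prop :=
  forall n m, C n -> C m -> N <= n -> N <= m -> ~ (n < m <= f n) /\ ~ (f n < m < n).

Definition tame (f : nat -> nat) (C : nat -> Prop) : Prop :=
  (exists M N, forall n, C n -> N <= n -> f n = M) \/ (exists N, noncrossing f C N).

Lemma tame_almost_sub (f : nat -> nat) (B C : nat -> Prop) :
  tame f B -> almost_sub C B -> tame f C.
Proof.
  intros HB Hs. destruct (finite_set_bounded _ Hs) as [L HL].
  assert (HCB : forall n, C n -> L <= n -> B n).
  { intros n Hn Hl. apply NNPP; intros Hb. specialize (HL n (conj Hn Hb)). lia. }
  destruct HB as [(M & N & H)|[N H]].
  - left. exists M, (max N L). intros n Hn Hl. apply H; [apply HCB|]; auto; lia.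
  - right. exists (max N L). intros n m Hn Hm h1 h2. apply H; try apply HCB; auto; lia.
Qed.

Lemma finite_fibers_bounded (A : nat -> Prop) (f : nat -> nat) :
  (forall M, finite_set (fun n => A n /\ f n = M)) ->
  forall a, exists L, forall n, A n -> f n <= a -> n < L.
Proof.
  intros H a. induction a as [|a [L1 H1]].
  - destruct (finite_set_bounded _ (H 0)) as [L HL].
    exists L. intros n Hn Hf. apply HL. split; [exact Hn|lia].
  - destruct (finite_set_bounded _ (H (S a))) as [L2 H2].
    exists (max L1 L2). intros n Hn Hf.
    destruct (Nat.eq_dec (f n) (S a)) as [e|e].
    + specialize (H2 n (conj Hn e)). lia.
    + specialize (H1 n Hn ltac:(lia)). lia.
Qed.

Lemma noncrossing_range (f s : nat -> nat) :
  (forall j, s j < s (S j) /\ f (s j) < s (S j) /\ s j <= f (s (S j))) ->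
  noncrossing f (fun n => exists j, s j = n) 0.
Proof.
  intros Hs n m [j <-] [j' <-] _ _.
  assert (Hinc : forall j, s j < s (S j)) by (intros; apply Hs).
  split; intros [h1 h2].
  - destruct (le_lt_dec j' j) as [h|h].
    + pose proof (strict_mono_le s Hinc _ _ h). lia.
    + pose proof (strict_mono_le s Hinc (S j) j' h). pose proof (Hs j). lia.
  - destruct (le_lt_dec j j') as [h|h].
    + pose proof (strict_mono_le s Hinc _ _ h). lia.
    + destruct j as [|j]; [lia|].
      pose proof (strict_mono_le s Hinc j' j ltac:(lia)). pose proof (Hs j). lia.
Qed.

Lemma finite_fibers_noncrossing_subset (f : nat -> nat) (A : nat -> Prop) :
  infinite_set A -> (forall M, finite_set (fun n => A n /\ f n = M)) ->
  exists B, infinite_set B /\ noncrossing f B 0 /\ forall n, B n -> A n.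
Proof.
  intros HA Hfin.
  assert (Hlarge : forall ab : nat * nat, exists n, A n /\ snd ab <= n /\ fst ab <= f n).
  { intros [a b]. destruct (finite_fibers_bounded _ _ Hfin a) as [L HL].
    destruct (infinite_set_unbounded _ HA (max b L)) as [n [Hn Hle]].
    exists n. simpl. split; [exact Hn|split; [lia|]].
    destruct (le_lt_dec a (f n)) as [h|h]; [exact h|]. specialize (HL n Hn ltac:(lia)). lia. }
  destruct (choice _ Hlarge) as [next Hnext].
  set (s := fix s j := match j with
                       | 0 => next (0, 0)
                       | S j => next (s j, S (max (s j) (f (s j))))
                       end).
  assert (Hs : forall j, s j < s (S j) /\ f (s j) < s (S j) /\ s j <= f (s (S j))).
  { intros j. change (s (S j)) with (next (s j, S (max (s j) (f (s j))))).
    destruct (Hnext (s j, S (max (s j) (f (s j))))) as (_ & h1 & h2). simpl in *. lia. }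
  exists (fun n => exists j, s j = n). split; [|split].
  - apply unbounded_infinite_set. intros M. exists (s M). split; [eauto|].
    apply strict_mono_ge_id. intros j. apply Hs.
  - apply noncrossing_range, Hs.
  - intros n [[|j] <-]; apply Hnext.
Qed.

Lemma tame_subset (f : nat -> nat) (A : nat -> Prop) :
  infinite_set A -> exists B, infinite_set B /\ tame f B /\ forall n, B n -> A n.
Proof.
  intros HA. destruct (classic (exists M, infinite_set (fun n => A n /\ f n = M))) as [[M HM]|HM].
  - exists (fun n => A n /\ f n = M). split; [exact HM|split].
    + left. exists M, 0. intros n [_ h] _. exact h.
    + intros n [h _]. exact h.
  - destruct (finite_fibers_noncrossing_subset f A HA) as (B & HB & Hnc & HBA).
    + intros M. apply NNPP. intros h. apply HM. eauto.
    + exists B. split; [exact HB|split; [right; eauto|exact HBA]].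
Qed.

Lemma common_tame_set (K : Type) (g : K -> nat -> nat) :
  card_lt_h K -> exists C, infinite_set C /\ forall k, tame (g k) C.
Proof.
  intros Hh. destruct (Hh (fun k B => infinite_set B /\ tame (g k) B)) as [C [HC HCk]].
  - intros k. split; [|split].
    + intros B [h _]. exact h.
    + intros A HA. destruct (tame_subset (g k) A HA) as (B & HB & HBt & HBA). eauto.
    + intros B C [_ HB] HC Hs. split; [exact HC|]. exact (tame_almost_sub _ _ _ HB Hs).
  - exists C. split; [exact HC|]. intros k. apply HCk.
Qed.

Definition block (c : nat -> nat) (i : nat) : list nat := seq (c (2*i)) (c (2*i+2) - c (2*i)).

Lemma in_block (c : nat -> nat) i m : In m (block c i) <-> c (2*i) <= m < c (2*i+2).
Proof. unfold block. rewrite in_seq. lia. Qed.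

Section Blocks.

Variable c : nat -> nat.
Hypothesis c_incr : forall i, c i < c (S i).

Lemma block_first i : In (c (2*i)) (block c i).
Proof. apply in_block. pose proof (strict_mono_lt c c_incr (2*i) (2*i+2)). lia. Qed.

Lemma block_nonempty i : block c i <> nil.
Proof. intros E. pose proof (block_first i) as h. rewrite E in h. exact h. Qed.

Lemma block_disjoint i j m : In m (block c i) -> In m (block c j) -> i = j.
Proof.
  rewrite !in_block. intros h1 h2. destruct (lt_eq_lt_dec i j) as [[h|h]|h]; [|exact h|].
  - pose proof (strict_mono_le c c_incr (2*i+2) (2*j) ltac:(lia)). lia.
  - pose proof (strict_mono_le c c_incr (2*j+2) (2*i) ltac:(lia)). lia.
Qed.

Lemma principal_set_block_inj i j : principal_set (block c i) = principal_set (block c j) -> i = j.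
Proof.
  intros E. assert (h : principal_set (block c i) (pr (c (2*i)))).
  { exists (c (2*i)). split; [apply block_first|reflexivity]. }
  rewrite E in h. destruct h as [m [Hm Em]]. apply pr_inj in Em. subst m.
  exact (block_disjoint i j _ (block_first i) Hm).
Qed.

Lemma noncrossing_in_block (f : nat -> nat) (C : nat -> Prop) N :
  (forall i, C (c i)) -> noncrossing f C N -> forall i, N <= i -> In (f (c (2*i+1))) (block c i).
Proof.
  intros HcC Hnc i hi. apply in_block.
  pose proof (strict_mono_ge_id c c_incr (2*i)).
  pose proof (strict_mono_lt c c_incr (2*i) (2*i+1) ltac:(lia)).
  pose proof (strict_mono_lt c c_incr (2*i+1) (2*i+2) ltac:(lia)).
  destruct (Hnc (c (2*i+1)) (c (2*i)) (HcC _) (HcC _) ltac:(lia) ltac:(lia)) as [_ h1].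
  destruct (Hnc (c (2*i+1)) (c (2*i+2)) (HcC _) (HcC _) ltac:(lia) ltac:(lia)) as [h2 _].
  lia.
Qed.

End Blocks.

Section SelectionLimit.

Variable X : bw -> Prop.
Variable L : nat -> list nat.
Hypothesis L_disjoint : forall i j m, In m (L i) -> In m (L j) -> i = j.
Variables (F : bw -> Prop) (p : bw).
Hypothesis F_CL : CL X F.
Hypothesis p_free : omega_star p.
Hypothesis p_converges :
  forall O, vietoris_open X O -> O F -> mem p (fun i => O (principal_set (L i))).
Variables (phi : nat -> nat) (i0 : nat).
Hypothesis phi_selects : forall i, i0 <= i -> In (phi i) (L i).

Let R (m : nat) : Prop := exists i, i0 <= i /\ phi i = m.

Lemma limit_point_on_selection (q : bw) : F q -> mem q R -> q = bw_image phi p.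
Proof.
  destruct F_CL as [[FX _] _]. intros Fq HqR. apply bw_ext. intros D HD.
  set (V := fun q' => X q' /\ mem q' (fun n => D n /\ R n)).
  assert (HO : vietoris_open X (vbasic nil (V :: nil))).
  { apply vietoris_open_vbasic; [simpl; tauto|]. intros V' [<-|[]]. apply open_in_mem. }
  assert (OF : vbasic nil (V :: nil) F).
  { split; [simpl; tauto|]. intros V' [<-|[]]. exists q.
    split; [exact Fq|split; [apply FX, Fq|apply mem_and; assumption]]. }
  rewrite mem_bw_image.
  apply (mem_superset _ _ _ (mem_and _ _ _ (p_converges _ HO OF) (omega_star_ge p i0 p_free))).
  intros i [[_ hV] hi].
  destruct (hV V (or_introl eq_refl)) as [q' [[m [Lm ->]] [_ [Dm [i' [hi' <-]]]]]].
  rewrite (L_disjoint i i' (phi i') Lm (phi_selects i' hi')). exact Dm.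
Qed.

Lemma limit_meets_selection : exists q, F q /\ mem q R.
Proof.
  destruct F_CL as [[FX _] _]. apply NNPP; intros Hn.
  set (U := fun q => X q /\ mem q (fun n => ~ R n)).
  assert (HO : vietoris_open X (vbasic (U :: nil) nil)).
  { apply vietoris_open_vbasic; [|simpl; tauto]. intros U' [<-|[]]. apply open_in_mem. }
  assert (OF : vbasic (U :: nil) nil F).
  { split; [|simpl; tauto]. intros U' [<-|[]] q Fq. split; [apply FX, Fq|].
    apply mem_compl. intros h. apply Hn. eauto. }
  destruct (mem_inhabited _ _ (mem_and _ _ _ (p_converges _ HO OF) (omega_star_ge p i0 p_free)))
    as [i [[hU _] hi]].
  destruct (hU U (or_introl eq_refl) (pr (phi i))) as [_ h].
  - exists (phi i). split; [apply phi_selects, hi|reflexivity].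
  - apply h. exists i. split; [exact hi|reflexivity].
Qed.

Lemma selection_limit_in : F (bw_image phi p).
Proof.
  destruct limit_meets_selection as [q [Fq HqR]].
  rewrite <- (limit_point_on_selection q Fq HqR). exact Fq.
Qed.

End SelectionLimit.

Definition free_images_in (K : Type) (X : bw -> Prop) : Prop :=
  forall g : K -> nat -> nat, exists p, omega_star p /\ forall k, X (bw_image (g k) p).

Section Core.

Variable X : bw -> Prop.
Hypothesis omega_sub_X : forall n, X (pr n).
Hypothesis CL_pseudocompact : pseudocompact (CL X) (vietoris_open X).

Lemma blocks_vietoris_limit (c : nat -> nat) : (forall i, c i < c (S i)) ->
  exists F p, CL X F /\ omega_star p /\
    forall O, vietoris_open X O -> O F -> mem p (fun i => O (principal_set (block c i))).
Proof.
  intros Hc.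
  assert (Hblock_CL : forall i, CL X (principal_set (block c i))).
  { intros i. apply principal_set_CL; [exact omega_sub_X|]. apply block_nonempty, Hc. }
  destruct (pseudocompact_accumulation_point _ _ _ (vietoris_open_true X) (vietoris_open_and X)
              (fun i => principal_set (block c i)) (principal_set_block_inj c Hc) Hblock_CL
              (fun i => vietoris_open_eq_principal_set X omega_sub_X _)
              (fun i => vietoris_open_neq X _ (Hblock_CL i)) CL_pseudocompact)
    as [F [HF Hacc]].
  destruct (accumulation_ultrafilter _ _ (vietoris_open_true X) (vietoris_open_and X) _ F Hacc)
    as [p [Hfree Hconv]].
  exists F, p. auto.
Qed.

Lemma exists_free_bw_images_in (K : Type) : card_lt_h K -> free_images_in K X.
Proof.
  intros Hh g.
  destruct (common_tame_set K g Hh) as [C [HC Htame]].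
  destruct (infinite_set_enum C HC) as [c [HcC Hc]].
  destruct (blocks_vietoris_limit c Hc) as (F & p & HF & Hfree & Hconv).
  assert (Hodd : forall i, 2*i+1 <= c (2*i+1)) by (intros i; apply strict_mono_ge_id, Hc).
  exists (bw_image (fun i => c (2*i+1)) p). split.
  - apply bw_image_omega_star; [|exact Hfree]. intros i. specialize (Hodd i). lia.
  - intros k. rewrite bw_image_comp. destruct (Htame k) as [(M & N & HM) | [N HN]].
    + rewrite (bw_image_eventually_constant _ _ M); [apply omega_sub_X|].
      apply (mem_superset _ _ _ (omega_star_ge p N Hfree)). intros i hi.
      apply HM; [apply HcC|]. specialize (Hodd i). lia.
    + apply (proj1 (proj1 HF)).
      apply (selection_limit_in X (block c) (block_disjoint c Hc) F p HF Hfree Hconv _ N).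
      exact (noncrossing_in_block c Hc _ C N HcC HN).
Qed.

End Core.

Lemma free_images_rel_countably_compact (X : bw -> Prop) (K : Type) :
  (forall n, X (pr n)) -> free_images_in K X ->
  rel_countably_compact (@prod_space K X) (@prod_open K X)
    (fun x : K -> bw => forall k, exists n, x k = pr n).
Proof.
  intros omega_sub_X Himg Z HZ [e [He HZe]].
  assert (Hcoord : forall kn : K * nat, exists m, e (snd kn) (fst kn) = pr m).
  { intros [k n]. apply (HZ (e n)), HZe. eauto. }
  destruct (choice _ Hcoord) as [g Hg].
  destruct (Himg (fun k n => g (k, n))) as [p [Hfree HX]].
  exists (fun k => bw_image (fun n => g (k, n)) p). split; [exact HX|].
  intros O HO Ox. destruct (HO _ HX Ox) as (ks & U & HUo & HUx & HOU).
  assert (HpO : mem p (fun n => O (e n))).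
  { assert (Hk : forall k, In k ks -> mem p (fun n => U k (e n k))).
    { intros k hk.
      apply (mem_superset _ _ _ (open_in_bw_image X omega_sub_X _ _ p (HUo k) (HUx k hk))).
      intros n h. rewrite (Hg (k, n) : e n k = _). exact h. }
    apply (mem_superset _ _ _ (mem_list_forall p _ ks Hk)). intros n hn.
    apply HOU; [|exact hn]. intros k. rewrite (Hg (k, n) : e n k = _). apply omega_sub_X. }
  intros [l Hl]. apply (omega_star_finite p _ Hfree (injective_preimage_finite e l He)).
  apply (mem_superset _ _ _ HpO). intros n On. apply Hl. split; [apply HZe; eauto|exact On].
Qed.

Lemma free_images_kappa_omega_star_pseudocompact (X : bw -> Prop) (K : Type) :
  (forall n, X (pr n)) -> free_images_in K X -> kappa_omega_star_pseudocompact K X.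
Proof.
  intros omega_sub_X Himg U HU.
  assert (Hpt : forall kn : K * nat, exists m, U (fst kn) (snd kn) (pr m)).
  { intros [k n]. destruct (HU k n) as [Ho [q Hq]].
    exact (open_in_pr X omega_sub_X _ q Ho Hq). }
  destruct (choice _ Hpt) as [g Hg].
  destruct (Himg (fun k n => g (k, n))) as [p [Hfree HX]].
  exists p. split; [exact Hfree|]. intros k.
  exists (bw_image (fun n => g (k, n)) p). split; [apply HX|]. intros V HV Vx.
  apply (mem_superset _ _ _ (open_in_bw_image X omega_sub_X V _ p HV Vx)).
  intros n hn. exists (pr (g (k, n))). split; [exact hn|exact (Hg (k, n))].
Qed.

Theorem theorem4p1 (X : bw -> Prop) (HomegaX : forall n : nat, X (pr n)) :
  pseudocompact (CL X) (vietoris_open X) ->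
  forall K : Type, card_lt_h K ->
    rel_countably_compact (@prod_space K X) (@prod_open K X)
      (fun x : K -> bw => forall k, exists n : nat, x k = pr n)
    /\ kappa_omega_star_pseudocompact K X.
Proof.
  intros Hps K Hh.
  pose proof (exists_free_bw_images_in X HomegaX Hps K Hh) as Himg.
  split.
  - exact (free_images_rel_countably_compact X K HomegaX Himg).
  - exact (free_images_kappa_omega_star_pseudocompact X K HomegaX Himg).
Qed.
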